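(* Let $x,y\in K^\vee\setminus K$ and let $\pi:K^\vee\to K^\vee/K$ be the canonical quotient map, where $K^\vee$ is regarded as a $K$-normed space with norm $|\cdot|$ and $K^\vee/K$ carries the quotient norm $\|\pi(z)\|=d(z,K)$. Then $x\nsim y$ if and only if $\{\pi(x),\pi(y)\}$ is an orthogonal set in $K^\vee/K$.
   Context: $K$ is a complete non-archimedean non-trivially valued field which is not spherically complete; $K^\vee$ is a fixed spherically complete valued field which is an immediate extension of $K$. For $a\in K^\vee$ and $X\subseteq K^\vee$, $d(a,X)=\inf_{x\in X}|a-x|$. For $x,y\in K^\vee\setminus K$, $x\sim y$ (''equivalent'') means there exist $\lambda,\mu\in K$ with $|\lambda x+\mu-y|\le d(y,K)$. A subset $S$ of a normed space not containing $0$ is orthogonal if $\|\sum_i\lambda_is_i\|=\max_i\|\lambda_is_i\|$ for all finitely many distinct $s_i\in S$ and $\lambda_i\in K$. *)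

From HB Require Import structures.
From mathcomp Require Import all_boot all_algebra.
From mathcomp Require Import all_classical all_reals.
Set Implicit Arguments. Unset Strict Implicit. Unset Printing Implicit Defensive.
Import GRing.Theory Num.Theory.
Local Open Scope ring_scope.
Local Open Scope classical_set_scope.

(* Setting: L plays the role of K^vee, a field with a (real-valued) absolute
   value [abs]; K is a subfield of L, given as a subset. *)
Section Defs.
Variables (R : realType) (L : fieldType) (abs : L -> R).

Definition nonarch_abs : Prop :=
  [/\ forall x, 0 <= abs x,
      forall x, abs x = 0 <-> x = 0,
      forall x y, abs (x * y) = abs x * abs y
    & forall x y, abs (x + y) <= Num.max (abs x) (abs y)].

Definition subfield (K : set L) : Prop :=
  [/\ K 0, K 1, (forall a b, K a -> K b -> K (a - b)),
      (forall a b, K a -> K b -> K (a * b))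
    & forall a, K a -> K a^-1].

Definition complete_in (K : set L) : Prop :=
  forall u : nat -> L, (forall n, K (u n)) ->
   (forall e : R, 0 < e -> exists N, forall m n, (N <= m)%N -> (N <= n)%N ->
       abs (u m - u n) < e) ->
   exists l, K l /\ forall e : R, 0 < e -> exists N, forall n, (N <= n)%N ->
       abs (u n - l) < e.

Definition nontrivially_valued (K : set L) : Prop :=
  exists a, K a /\ abs a <> 0 /\ abs a <> 1.

Definition spherically_complete (K : set L) : Prop :=
  forall (c : nat -> L) (r : nat -> R),
    (forall n, K (c n)) -> (forall n, 0 < r n) ->
    (forall n z, K z -> abs (z - c n.+1) <= r n.+1 -> abs (z - c n) <= r n) ->
    exists z, K z /\ forall n, abs (z - c n) <= r n.

(* L is an immediate extension of K: same value group, same residue field *)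
Definition immediate (K : set L) : Prop :=
  (forall x, x != 0 -> exists a, K a /\ abs a = abs x) /\
  (forall x, abs x <= 1 -> exists a, K a /\ abs (x - a) < 1).

Definition distK (K : set L) (z : L) : R := inf [set abs (z - a) | a in K].

Definition equivK (K : set L) (x y : L) : Prop :=
  exists la mu, K la /\ K mu /\ abs (la * x + mu - y) <= distK K y.

(* The pair (pi x, pi y) is orthogonal in the quotient K-normed space L/K,
   with quotient norm ||pi z|| = d(z, K); written out through pi, using
   lambda pi(x) + mu pi(y) = pi(lambda x + mu y). "Not containing 0" means
   pi x <> 0, pi y <> 0, i.e. x, y not in K. *)
Definition orthogonal_pair (K : set L) (x y : L) : Prop :=
  ~ K x /\ ~ K y /\
  forall la mu, K la -> K mu ->
    distK K (la * x + mu * y) = Num.max (distK K (la * x)) (distK K (mu * y)).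

End Defs.

From mathcomp Require Import all_boot all_order all_algebra.
From mathcomp Require Import all_classical all_reals.
From mathcomp Require Import ring.
Set Implicit Arguments. Unset Strict Implicit. Unset Printing Implicit Defensive.
Import GRing.Theory Num.Theory Order.TTheory.
Local Open Scope ring_scope.
Local Open Scope classical_set_scope.

(* The distance d(., K) is a non-archimedean seminorm on L that is invariant
   under translation by K; this makes the isosceles principle available.
   If d(la x + mu y) < max (d(la x), d(mu y)), then d(la x) = d(mu y), so
   mu <> 0 and some a in K satisfies |la x + mu y - a| < |mu| d(y); dividing
   by -mu shows x ~ y.  Conversely, if z = la x + mu - y has |z| <= d(y),
   orthogonality of pi x and pi (-y) gives d(z) >= d(y) >= |z|, and z <> 0
   because d(y) > 0 (K is closed, being complete).  But in an immediate
   extension every z <> 0 is approximated by some b c in K, with |b| = |z|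
   and |z/b - c| < 1, so that d(z) <= |z - b c| < |z|. *)

Section NonArchimedeanAbs.
Variables (R : realType) (L : fieldType) (abs : L -> R).
Hypothesis habs : nonarch_abs abs.

Lemma abs_ge0 x : 0 <= abs x.
Proof. by case: habs. Qed.

Lemma abs_eq0 x : (abs x == 0) = (x == 0).
Proof. by case: habs => _ h _ _; apply/eqP/eqP => /h. Qed.

Lemma abs0 : abs 0 = 0.
Proof. by apply/eqP; rewrite abs_eq0. Qed.

Lemma abs_gt0 x : (0 < abs x) = (x != 0).
Proof. by rewrite lt_def abs_eq0 abs_ge0 andbT. Qed.

Lemma absM x y : abs (x * y) = abs x * abs y.
Proof. by case: habs. Qed.

Lemma abs_ultra x y : abs (x + y) <= Num.max (abs x) (abs y).
Proof. by case: habs. Qed.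

Lemma abs_ultraB x y z : abs (x - z) <= Num.max (abs (x - y)) (abs (y - z)).
Proof.
have -> : x - z = (x - y) + (y - z) by ring.
exact: abs_ultra.
Qed.

Lemma abs1 : abs 1 = 1.
Proof.
have n0 : abs 1 != 0 by rewrite abs_eq0 oner_eq0.
by apply: (mulfI n0); rewrite -absM !mulr1.
Qed.

Lemma absN1 : abs (-1) = 1.
Proof.
have /eqP : abs (-1) ^+ 2 = 1 by rewrite expr2 -absM mulrNN mulr1 abs1.
rewrite sqrf_eq1 => /orP[/eqP // | /eqP hN].
by have := abs_ge0 (-1); rewrite hN oppr_ge0 ler10.
Qed.

Lemma absN x : abs (- x) = abs x.
Proof. by rewrite -mulN1r absM absN1 mul1r. Qed.

Lemma absV x : abs x^-1 = (abs x)^-1.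
Proof.
have [->|x0] := eqVneq x 0; first by rewrite invr0 abs0 invr0.
have n0 : abs x != 0 by rewrite abs_eq0.
by apply: (mulfI n0); rewrite -absM !mulfV // abs1.
Qed.

End NonArchimedeanAbs.

Section Subfield.
Variables (L : fieldType) (K : set L).
Hypothesis hK : subfield K.

Lemma subfield0 : K 0.
Proof. by case: hK. Qed.

Lemma subfield1 : K 1.
Proof. by case: hK. Qed.

Lemma subfieldB a b : K a -> K b -> K (a - b).
Proof. by case: hK => _ _ hB _ _; apply: hB. Qed.

Lemma subfieldN a : K a -> K (- a).
Proof. by rewrite -sub0r; apply/subfieldB/subfield0. Qed.

Lemma subfieldD a b : K a -> K b -> K (a + b).
Proof. by move=> Ka Kb; rewrite -[b]opprK; apply/subfieldB/subfieldN. Qed.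

Lemma subfieldM a b : K a -> K b -> K (a * b).
Proof. by case: hK => _ _ _ hM _; apply: hM. Qed.

Lemma subfield_div a b : K a -> K b -> K (a / b).
Proof. by case: hK => _ _ _ _ hV Ka /hV; apply: subfieldM. Qed.

End Subfield.

Section DistanceToSubfield.
Variables (R : realType) (L : fieldType) (abs : L -> R) (K : set L).
Hypotheses (habs : nonarch_abs abs) (hK : subfield K).

Local Notation d := (distK abs K).

Let dist_set_neq0 z : [set abs (z - a) | a in K] !=set0.
Proof. by exists (abs (z - 0)), 0 => //; apply: subfield0. Qed.

Lemma distK_le z a : K a -> d z <= abs (z - a).
Proof.
move=> Ka; apply: ge_inf; last by exists a.
by exists 0 => _ [b _ <-]; apply: abs_ge0.
Qed.

Lemma distK_ge z r : (forall a, K a -> r <= abs (z - a)) -> r <= d z.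
Proof. by move=> hr; apply: lb_le_inf => // _ [a Ka <-]; apply: hr. Qed.

Lemma distK_lt z r : d z < r -> exists2 a, K a & abs (z - a) < r.
Proof. by case/(inf_lt (dist_set_neq0 z)) => _ [a Ka <-]; exists a. Qed.

Lemma distK_ge0 z : 0 <= d z.
Proof. by apply: distK_ge => a _; apply: abs_ge0. Qed.

Lemma distK_le_abs z : d z <= abs z.
Proof. by have := distK_le z (subfield0 hK); rewrite subr0. Qed.

Lemma distKZ_le mu z : K mu -> d (mu * z) <= abs mu * d z.
Proof.
move=> Kmu; have [->|mu0] := eqVneq mu 0.
  by rewrite mul0r (abs0 habs) mul0r -(abs0 habs) distK_le_abs.
rewrite [abs mu * _]mulrC -ler_pdivrMr ?abs_gt0 //; apply: distK_ge => a Ka.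
rewrite ler_pdivrMr ?abs_gt0 // [_ * abs mu]mulrC -absM // mulrBr.
by apply: distK_le; apply: subfieldM.
Qed.

Lemma distKN z : d (- z) = d z.
Proof.
have KN1 : K (-1) := subfieldN hK (subfield1 hK).
have le_N w : d (- w) <= d w.
  by have := distKZ_le w KN1; rewrite absN1 // mulN1r mul1r.
by apply/eqP; rewrite eq_le le_N -{1}[z]opprK le_N.
Qed.

Lemma distKDr z a : K a -> d (z + a) = d z.
Proof.
have le_D w c : K c -> d (w + c) <= d w.
  move=> Kc; apply: distK_ge => b Kb.
  have -> : w - b = w + c - (b + c) by ring.
  exact/distK_le/(subfieldD hK).
move=> Ka; apply/eqP; rewrite eq_le le_D //= -{1}(addrK a z).
exact/le_D/(subfieldN hK).
Qed.

Lemma distKD u v : d (u + v) <= Num.max (d u) (d v).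
Proof.
rewrite leNgt gt_max; apply/negP => /andP[/distK_lt [a Ka ha] /distK_lt [b Kb hb]].
have := distK_le (u + v) (subfieldD hK Ka Kb).
have -> : u + v - (a + b) = (u - a) + (v - b) by ring.
move/le_trans/(_ (abs_ultra habs _ _)).
by rewrite leNgt gt_max ha hb.
Qed.

Lemma distK_isosceles u v : d (u + v) < Num.max (d u) (d v) -> d (u + v) < d v.
Proof.
move=> hlt; rewrite ltNge; apply/negP => hv.
have := distKD (u + v) (- v); rewrite addrK distKN => hu.
have : Num.max (d u) (d v) <= d (u + v).
  by rewrite ge_max hv andbT (le_trans hu) // ge_max lexx hv.
by rewrite leNgt hlt.
Qed.

Hypotheses (hcomplete : complete_in abs K) (himm : immediate abs K).

Lemma complete_closed y :
  (forall e, 0 < e -> exists2 a, K a & abs (y - a) < e) -> K y.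
Proof.
move=> approx.
have /choice [u hu] : forall n, exists a, K a /\ abs (y - a) < n.+1%:R^-1.
  move=> n; have [|a Ka ha] := approx n.+1%:R^-1; last by exists a.
  by rewrite invr_gt0 ltr0n.
have close e : 0 < e -> exists N, forall n, (N <= n)%N -> abs (y - u n) < e.
  move=> e0; have [N] := ltr_add_invr e0; rewrite add0r => hN.
  exists N => n hn; apply: (lt_le_trans (hu n).2); apply/ltW/(le_lt_trans _ hN).
  by rewrite lef_pV2 ?posrE ?ltr0n ?ler_nat.
have [|l [Kl hl]] := hcomplete (fun n => (hu n).1).
  move=> e /close [N hN]; exists N => m n hm hn.
  apply: le_lt_trans (abs_ultraB habs _ y _) _.
  by rewrite -(absN habs (u m - y)) opprB gt_max !hN.
suff : abs (y - l) == 0 by rewrite abs_eq0 // subr_eq0 => /eqP ->.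
rewrite eq_le abs_ge0 // andbT leNgt; apply/negP => e0.
have [N1 h1] := hl _ e0; have [N2 h2] := close _ e0.
suff : abs (y - l) < abs (y - l) by rewrite ltxx.
apply: le_lt_trans (abs_ultraB habs y (u (maxn N1 N2)) l) _.
by rewrite gt_max h1 ?h2 ?leq_maxl ?leq_maxr.
Qed.

Lemma distK_gt0 y : ~ K y -> 0 < d y.
Proof.
move=> Ky; rewrite lt_def distK_ge0 andbT; apply/eqP => d0.
by apply/Ky/complete_closed => e e0; apply: distK_lt; rewrite d0.
Qed.

Lemma distK_lt_abs z : z != 0 -> d z < abs z.
Proof.
move=> z0; have [b [Kb hb]] := himm.1 z z0.
have b0 : b != 0 by rewrite -(abs_eq0 habs) hb abs_eq0.
have [c [Kc hc]] : exists c, K c /\ abs (z / b - c) < 1.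
  by apply: himm.2; rewrite absM // absV // hb mulfV // abs_eq0.
apply: le_lt_trans (distK_le _ (subfieldM hK Kb Kc)) _.
have -> : z - b * c = b * (z / b - c) by field.
by rewrite absM // hb gtr_pMr // abs_gt0.
Qed.

Lemma not_equivK_orthogonal x y :
  ~ K x -> ~ K y -> ~ equivK abs K x y -> orthogonal_pair abs K x y.
Proof.
move=> Kx Ky nxy; split=> //; split=> // la mu Kla Kmu.
apply/eqP; rewrite eq_le distKD leNgt; apply/negP => /distK_isosceles hlt.
have [a Ka ha] := distK_lt (lt_le_trans hlt (distKZ_le y Kmu)).
have mu0 : mu != 0.
  by apply: contraTneq ha => ->; rewrite (abs0 habs) !mul0r -leNgt abs_ge0.
apply: nxy; exists (- la / mu), (a / mu).
split; first by apply: subfield_div (subfieldN hK Kla) Kmu.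
split; first exact: subfield_div.
have -> : - la / mu * x + a / mu - y = (la * x + mu * y - a) * - mu^-1 by field.
rewrite absM // absN // absV // ler_pdivrMr ?abs_gt0 // [d y * _]mulrC.
exact: ltW.
Qed.

Lemma orthogonal_not_equivK x y :
  orthogonal_pair abs K x y -> ~ equivK abs K x y.
Proof.
case=> _ [Ky orth] [la [mu [Kla [Kmu hz]]]].
set z := la * x + mu - y in hz.
have dy_le_dz : d y <= d z.
  have -> : z = la * x - y + mu by rewrite /z; ring.
  have KN1 : K (-1) := subfieldN hK (subfield1 hK).
  rewrite distKDr // -mulN1r orth // mulN1r distKN.
  by rewrite le_max lexx orbT.
have z0 : z != 0.
  rewrite -(abs_eq0 habs) gt_eqF // (lt_le_trans (distK_gt0 Ky)) //.
  exact: le_trans dy_le_dz (distK_le_abs z).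
by have := distK_lt_abs z0; rewrite ltNge (le_trans hz dy_le_dz).
Qed.

End DistanceToSubfield.

Theorem mainTheorem2 (R : realType) (L : fieldType) (abs : L -> R) (K : set L) :
  nonarch_abs abs -> subfield K -> complete_in abs K ->
  nontrivially_valued abs K -> ~ spherically_complete abs K ->
  spherically_complete abs setT -> immediate abs K ->
  forall x y : L, ~ K x -> ~ K y ->
    (~ equivK abs K x y <-> orthogonal_pair abs K x y).
Proof.
move=> habs hK hcomplete _ _ _ himm x y Kx Ky; split.
- exact: not_equivK_orthogonal.
- exact: orthogonal_not_equivK.
Qed.
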